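(* Let $\gamma(s)$ be an arc-length parametrized triharmonic curve with vanishing torsion immersed in a Bianchi–Cartan–Vranceanu space $M(a,b)$ with $4a\neq b^2$. Then the curvature of $\gamma$ is constant.
   Context: For real $a,b$, the BCV space $M(a,b)$ is $\{(x,y,z)\in\mathbb{R}^3:\lambda_a=1+a(x^2+y^2)>0\}$ with the metric $$g_{a,b}=\frac{dx^2+dy^2}{[1+a(x^2+y^2)]^2}+\left(dz+\frac{b}{2}\,\frac{y\,dx-x\,dy}{1+a(x^2+y^2)}\right)^2.$$ For an arc-length parametrized curve $\gamma$ in a Riemannian manifold $M$ with Levi-Civita connection $\nabla$, curvature tensor $R^M(X,Y)=\nabla_X\nabla_Y-\nabla_Y\nabla_X-\nabla_{[X,Y]}$ and $T=\gamma'$, $\gamma$ is triharmonic if $\nabla_T^5T+R^M(\nabla_T^3T,T)T-R^M(\nabla_T^2T,\nabla_TT)T=0$. Curvature $\kappa$ and torsion $\tau$ of a non-geodesic curve are defined by the Frenet equations $\nabla_TT=\kappa N$, $\nabla_TN=-\kappa T+\tau B$, $\nabla_TB=-\tau N$. *)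

From Stdlib Require Import Reals.
From Coquelicot Require Import Coquelicot.
Open Scope R_scope.

(** Coordinate indices of R^3: I0 = x, I1 = y, I2 = z. *)
Inductive idx := I0 | I1 | I2.

Definition pt := idx -> R.

Definition sum3 (f : idx -> R) : R := f I0 + f I1 + f I2.

Definition idx_eqb (i j : idx) : bool :=
  match i, j with
  | I0, I0 | I1, I1 | I2, I2 => true
  | _, _ => false
  end.

Definition nxt (i : idx) : idx :=
  match i with I0 => I1 | I1 => I2 | I2 => I0 end.

Definition upd (p : pt) (i : idx) (t : R) : pt :=
  fun j => if idx_eqb i j then t else p j.

Definition partial (f : pt -> R) (i : idx) (p : pt) : R :=
  Derive (fun t => f (upd p i t)) (p i).

Definition lam (a : R) (p : pt) : R := 1 + a * (p I0 ^ 2 + p I1 ^ 2).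

(** The BCV metric in coordinates:
    g = (dx^2 + dy^2)/lam^2 + (dz + (b/2)(y dx - x dy)/lam)^2 *)
Definition bcv_metric (a b : R) (p : pt) (i j : idx) : R :=
  let l := lam a p in
  let w (k : idx) : R :=
    match k with
    | I0 => b / 2 * p I1 / l
    | I1 => - (b / 2) * p I0 / l
    | I2 => 1
    end in
  let h (k m : idx) : R :=
    match k, m with
    | I0, I0 => 1 / l ^ 2
    | I1, I1 => 1 / l ^ 2
    | _, _ => 0
    end in
  h i j + w i * w j.

(** cofactor of entry (r,c) of a 3x3 matrix (cyclic formula, sign included) *)
Definition cof3 (m : idx -> idx -> R) (r c : idx) : R :=
  m (nxt r) (nxt c) * m (nxt (nxt r)) (nxt (nxt c))
  - m (nxt r) (nxt (nxt c)) * m (nxt (nxt r)) (nxt c).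

Definition det3 (m : idx -> idx -> R) : R := sum3 (fun c => m I0 c * cof3 m I0 c).

Definition inv3 (m : idx -> idx -> R) (i j : idx) : R := cof3 m j i / det3 m.

Definition bcv_inv (a b : R) (p : pt) : idx -> idx -> R := inv3 (bcv_metric a b p).

Definition Gamma (a b : R) (p : pt) (k i j : idx) : R :=
  1 / 2 * sum3 (fun l => bcv_inv a b p k l *
     (partial (fun q => bcv_metric a b q j l) i p
      + partial (fun q => bcv_metric a b q i l) j p
      - partial (fun q => bcv_metric a b q i j) l p)).

(** Components R^l_{ijk} with R(d_i, d_j) d_k = R^l_{ijk} d_l, for
    R(X,Y) = nabla_X nabla_Y - nabla_Y nabla_X - nabla_[X,Y] *)
Definition Riem (a b : R) (p : pt) (l i j k : idx) : R :=
  partial (fun q => Gamma a b q l j k) i p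
  - partial (fun q => Gamma a b q l i k) j p
  + sum3 (fun m => Gamma a b p l i m * Gamma a b p m j k
                   - Gamma a b p l j m * Gamma a b p m i k).

Definition Rop (a b : R) (p : pt) (X Y Z : pt) : pt :=
  fun l => sum3 (fun i => sum3 (fun j => sum3 (fun k =>
             X i * Y j * Z k * Riem a b p l i j k))).

Definition inner (a b : R) (p : pt) (X Y : pt) : R :=
  sum3 (fun i => sum3 (fun j => bcv_metric a b p i j * X i * Y j)).

Definition vel (gam : R -> pt) (s : R) : pt :=
  fun i => Derive (fun t => gam t i) s.

Definition cov (a b : R) (gam : R -> pt) (V : R -> pt) (s : R) : pt :=
  fun k => Derive (fun t => V t k) s
           + sum3 (fun i => sum3 (fun j =>
               Gamma a b (gam s) k i j * vel gam s i * V s j)).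

Fixpoint covT (a b : R) (gam : R -> pt) (n : nat) : R -> pt :=
  match n with
  | O => vel gam
  | S n' => cov a b gam (covT a b gam n')
  end.

Definition in_open_int (s0 s1 : Rbar) (s : R) : Prop := Rbar_lt s0 s /\ Rbar_lt s s1.

Definition triharmonic (a b : R) (gam : R -> pt) (I : R -> Prop) : Prop :=
  forall s, I s -> forall l : idx,
    covT a b gam 5 s l
    + Rop a b (gam s) (covT a b gam 3 s) (vel gam s) (vel gam s) l
    - Rop a b (gam s) (covT a b gam 2 s) (covT a b gam 1 s) (vel gam s) l = 0.

From Pilot Require Import Defs.
From Stdlib Require Import Reals Lra Lia Psatz FunctionalExtensionality.
From Coquelicot Require Import Coquelicot.
Open Scope R_scope.

(* With vanishing torsion the Frenet equations give [nabla_T^n T = alpha_n T + beta_n N],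
   with [alpha_n], [beta_n] polynomials in [kappa] and its derivatives, while the curvature
   of M(a,b) is [R(X,Y)Z = k1 (<Y,Z> X - <X,Z> Y) + k2 (terms in xi)], [xi = d_z] being a
   unit Killing field and [k2 = 4a - b^2 <> 0].  Projected on [T], [N], [B] the triharmonic
   equation reads [alpha_5 = 0], [beta_5 + (kappa'' - 2 kappa^3)(k1 - k2 (<T,xi>^2 + <N,xi>^2)) = 0]
   and [(kappa'' - 2 kappa^3) k2 <N,xi> <B,xi> = 0].
   Suppose [kappa' <> 0] on an interval.  The third equation gives [<N,xi> <B,xi> = 0]
   (otherwise [kappa'' = 2 kappa^3], and [alpha_5 = 0] becomes [kappa^3 kappa' = 0]).
   If [b = 0], [xi] is parallel, [<T,xi>^2 + <N,xi>^2] is constant and [kappa] solves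
   [alpha_5 = 0], [beta_5 + c (kappa'' - 2 kappa^3) = 0]; this system has a first integral [C],
   and eliminating the derivatives of [kappa] yields a polynomial in [kappa^2] which must vanish
   identically, whence [c = C = 0] and [kappa^4 + kappa'^2 = 0].  If [b <> 0], expanding [xi]
   and [nabla_T xi] in the frame forces [<N,xi> = 0] and [<T,xi>] constant, and then
   [kappa^2 <T,xi>^2 = b^2/4 (1 - <T,xi>^2)] cannot hold while [kappa' <> 0]. *)

(** * Real-analysis preliminaries *)

Fixpoint smooth_n (J : R -> Prop) (n : nat) (f : R -> R) : Prop :=
  match n with
  | O => True
  | S n => (forall t, J t -> ex_derive f t) /\ smooth_n J n (Derive f)
  end.

Definition smooth_on (J : R -> Prop) (f : R -> R) : Prop := forall n, smooth_n J n f.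

Section Smooth.

Variable J : R -> Prop.
Hypothesis J_open : @open R_UniformSpace J.

Lemma smooth_n_ext (n : nat) : forall f g,
  (forall t, J t -> f t = g t) -> smooth_n J n f -> smooth_n J n g.
Proof.
  induction n as [|n IH]; intros f g E Hf; simpl; auto.
  destruct Hf as [Hd Hn].
  assert (L : forall t, J t -> locally t (fun u => f u = g u))
    by (intros t Ht; generalize (J_open t Ht); apply filter_imp; exact E).
  split.
  - intros t Ht. exact (ex_derive_ext_loc f g t (L t Ht) (Hd t Ht)).
  - apply (IH (Derive f)); auto. intros t Ht. exact (Derive_ext_loc f g t (L t Ht)).
Qed.

Lemma smooth_n_S (n : nat) : forall f, smooth_n J (S n) f -> smooth_n J n f.
Proof.
  induction n as [|n IH]; intros f Hf; simpl in *; auto.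
  destruct Hf as [Hd [Hd' Hn]]. split; auto.
Qed.

Lemma smooth_n_const (n : nat) : forall c, smooth_n J n (fun _ => c).
Proof.
  induction n as [|n IH]; intros c; simpl; auto. split.
  - intros. apply ex_derive_const.
  - apply (smooth_n_ext n (fun _ => 0)); auto. intros t _. rewrite Derive_const. reflexivity.
Qed.

(* One induction for all four operations: the derivative of a product, an inverse or a
   square root is built from these same operations at the previous order. *)
Lemma smooth_n_closed (n : nat) :
  (forall f g, smooth_n J n f -> smooth_n J n g -> smooth_n J n (fun t => f t + g t)) /\
  (forall f g, smooth_n J n f -> smooth_n J n g -> smooth_n J n (fun t => f t * g t)) /\
  (forall f, smooth_n J n f -> (forall t, J t -> f t <> 0) -> smooth_n J n (fun t => / f t)) /\
  (forall f, smooth_n J n f -> (forall t, J t -> 0 < f t) -> smooth_n J n (fun t => sqrt (f t))).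
Proof.
  induction n as [|n [IHp [IHm [IHi IHs]]]]; [simpl; tauto|].
  assert (Pp : forall f g, smooth_n J (S n) f -> smooth_n J (S n) g ->
                 smooth_n J (S n) (fun t => f t + g t)).
  { intros f g [Df Hf] [Dg Hg]. split.
    - intros t Ht. exact (ex_derive_plus f g t (Df t Ht) (Dg t Ht)).
    - apply (smooth_n_ext n (fun t => Derive f t + Derive g t)); auto.
      intros t Ht. rewrite Derive_plus; auto. }
  assert (Pm : forall f g, smooth_n J (S n) f -> smooth_n J (S n) g ->
                 smooth_n J (S n) (fun t => f t * g t)).
  { intros f g Sf Sg. pose proof Sf as [Df Hf]. pose proof Sg as [Dg Hg]. split.
    - intros t Ht. exact (ex_derive_mult f g t (Df t Ht) (Dg t Ht)).
    - apply (smooth_n_ext n (fun t => Derive f t * g t + f t * Derive g t)).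
      + intros t Ht. rewrite Derive_mult; auto.
      + apply IHp; apply IHm; auto; apply smooth_n_S; auto. }
  assert (Pi : forall f, smooth_n J (S n) f -> (forall t, J t -> f t <> 0) ->
                 smooth_n J (S n) (fun t => / f t)).
  { intros f Sf Hnz. pose proof Sf as [Df Hf]. split.
    - intros t Ht. apply ex_derive_inv; auto.
    - apply (smooth_n_ext n (fun t => (fun _ => -1) t * Derive f t * (/ f t * / f t))).
      + intros t Ht. rewrite Derive_inv; auto. field. auto.
      + apply IHm; [apply IHm; [apply smooth_n_const | exact Hf]|].
        apply IHm; apply IHi; auto; apply smooth_n_S; auto. }
  split; [exact Pp|]. split; [exact Pm|]. split; [exact Pi|].
  intros f Sf Hpos. pose proof Sf as [Df Hf].
  assert (Hsq : forall t, J t -> sqrt (f t) <> 0)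
    by (intros t Ht; apply Rgt_not_eq, sqrt_lt_R0; auto).
  split.
  - intros t Ht. destruct (Df t Ht) as [df Hdf]. exists (df / (2 * sqrt (f t))).
    apply is_derive_sqrt; auto.
  - apply (smooth_n_ext n (fun t => Derive f t * ((fun _ => / 2) t * / sqrt (f t)))).
    + intros t Ht. destruct (Df t Ht) as [df Hdf].
      replace (Derive (fun u => sqrt (f u)) t) with (df / (2 * sqrt (f t)))
        by (symmetry; apply is_derive_unique, is_derive_sqrt; auto).
      rewrite (is_derive_unique _ _ _ Hdf). field. exact (Hsq t Ht).
    + apply IHm; auto. apply IHm; [apply smooth_n_const|].
      apply IHi; [apply IHs; auto; apply smooth_n_S; auto | exact Hsq].
Qed.

Lemma smooth_plus f g : smooth_on J f -> smooth_on J g -> smooth_on J (fun t => f t + g t).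
Proof. intros Hf Hg n. apply (smooth_n_closed n); auto. Qed.

Lemma smooth_mult f g : smooth_on J f -> smooth_on J g -> smooth_on J (fun t => f t * g t).
Proof. intros Hf Hg n. apply (smooth_n_closed n); auto. Qed.

Lemma smooth_inv f : smooth_on J f -> (forall t, J t -> f t <> 0) -> smooth_on J (fun t => / f t).
Proof. intros Hf Hnz n. apply (smooth_n_closed n); auto. Qed.

Lemma smooth_sqrt f :
  smooth_on J f -> (forall t, J t -> 0 < f t) -> smooth_on J (fun t => sqrt (f t)).
Proof. intros Hf Hpos n. apply (smooth_n_closed n); auto. Qed.

Lemma smooth_const c : smooth_on J (fun _ => c).
Proof. intros n. apply smooth_n_const. Qed.

Lemma smooth_ext f g : (forall t, J t -> f t = g t) -> smooth_on J f -> smooth_on J g.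
Proof. intros E Hf n. exact (smooth_n_ext n f g E (Hf n)). Qed.

Lemma smooth_opp f : smooth_on J f -> smooth_on J (fun t => - f t).
Proof.
  intros Hf. apply (smooth_ext (fun t => (fun _ => -1) t * f t)).
  - intros t _. ring.
  - apply smooth_mult; [apply smooth_const | exact Hf].
Qed.

Lemma smooth_minus f g : smooth_on J f -> smooth_on J g -> smooth_on J (fun t => f t - g t).
Proof. intros Hf Hg. apply smooth_plus; [|apply smooth_opp]; assumption. Qed.

Lemma smooth_div f g : smooth_on J f -> smooth_on J g -> (forall t, J t -> g t <> 0) ->
  smooth_on J (fun t => f t / g t).
Proof. intros Hf Hg Hnz. apply smooth_mult; [|apply smooth_inv]; assumption. Qed.

Lemma smooth_pow f (k : nat) : smooth_on J f -> smooth_on J (fun t => f t ^ k).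
Proof.
  intros Hf. induction k as [|k IH]; simpl; [apply smooth_const | apply smooth_mult; assumption].
Qed.

End Smooth.

Lemma smooth_Derive J f : smooth_on J f -> smooth_on J (Derive f).
Proof. intros Hf n. exact (proj2 (Hf (S n))). Qed.

Lemma smooth_Derive_n J f (k : nat) : smooth_on J f -> smooth_on J (Derive_n f k).
Proof. intros Hf. induction k as [|k IH]; [exact Hf | apply smooth_Derive, IH]. Qed.

Lemma smooth_ex_derive J f t : smooth_on J f -> J t -> ex_derive f t.
Proof. intros Hf Ht. exact (proj1 (Hf 1%nat) t Ht). Qed.

Lemma smooth_of_ex_derive_n J f :
  (forall t, J t -> forall n, ex_derive_n f n t) -> smooth_on J f.
Proof.
  intros H.
  assert (K : forall n k, smooth_n J n (Derive_n f k)).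
  { induction n as [|n IH]; intros k; simpl; auto. split.
    - intros t Ht. exact (H t Ht (S k)).
    - exact (IH (S k)). }
  intros n. exact (K n 0%nat).
Qed.

Ltac smooth_with J_open leaf := repeat first
  [ leaf | apply (smooth_plus _ J_open) | apply (smooth_minus _ J_open)
  | apply (smooth_mult _ J_open) | apply (smooth_div _ J_open) | apply (smooth_opp _ J_open)
  | apply (smooth_pow _ J_open) | apply (smooth_inv _ J_open) | apply (smooth_sqrt _ J_open)
  | apply (smooth_const _ J_open) | assumption ].

Definition is_interval (U : R -> Prop) : Prop :=
  forall x y z, U x -> U y -> x <= z <= y -> U z.

Lemma in_open_int_open (s0 s1 : Rbar) : @open R_UniformSpace (in_open_int s0 s1).
Proof.
  apply (open_and (T := R_UniformSpace) (fun u : R => Rbar_lt s0 u) (fun u : R => Rbar_lt u s1)).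
  - apply open_Rbar_gt.
  - apply open_Rbar_lt.
Qed.

Lemma in_open_int_interval (s0 s1 : Rbar) : is_interval (in_open_int s0 s1).
Proof.
  intros x y z [Hx1 Hx2] [Hy1 Hy2] Hz. unfold in_open_int.
  destruct s0 as [r0| |], s1 as [r1| |]; simpl in *; split; auto; lra.
Qed.

Lemma locally_in_open_int (P : R -> Prop) (s : R) : locally s P ->
  exists e, 0 < e /\ forall u, in_open_int (s - e) (s + e) u -> P u.
Proof.
  intros [eps H]. exists eps. split; [apply cond_pos|].
  intros u [H1 H2]. apply H. change (Rabs (u - s) < eps). simpl in H1, H2. apply Rabs_def1; lra.
Qed.

Lemma locally_pos (f : R -> R) (x : R) : continuous f x -> 0 < f x ->
  locally x (fun t => 0 < f t).
Proof. intros Hc Hp. apply Hc. exact (open_gt 0 _ Hp). Qed.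

Lemma locally_neq0 (f : R -> R) (x : R) : ex_derive f x -> f x <> 0 ->
  locally x (fun t => f t <> 0).
Proof.
  intros Hd Hn. apply (ex_derive_continuous (K := R_AbsRing) (V := R_NormedModule)) in Hd.
  exact (Hd _ (open_neq 0 (f x) Hn)).
Qed.

Lemma is_derive_locally_zero (f : R -> R) (u d : R) :
  locally u (fun v => f v = 0) -> is_derive f u d -> d = 0.
Proof.
  intros Hl Hd. rewrite <- (is_derive_unique _ _ _ Hd). apply is_derive_unique.
  apply (is_derive_ext_loc (fun _ => 0) f u 0).
  - generalize Hl. apply filter_imp. intros v Hv. auto.
  - apply (is_derive_const (K := R_AbsRing) (V := R_NormedModule)).
Qed.

Lemma pow2_eq0 (x : R) : x ^ 2 = 0 -> x = 0.
Proof. intros H. apply Rsqr_0_uniq. rewrite Rsqr_pow2. exact H. Qed.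

Lemma is_derive_sum_sq (f g : R -> R) (x df dg : R) : is_derive f x df -> is_derive g x dg ->
  is_derive (fun y => f y ^ 2 + g y ^ 2) x (2 * f x * df + 2 * g x * dg).
Proof.
  intros Hf Hg.
  apply (is_derive_ext (fun y => plus (f y ^ 2) (g y ^ 2))); [reflexivity|].
  replace (2 * f x * df + 2 * g x * dg) with (plus (INR 2 * df * f x ^ 1) (INR 2 * dg * g x ^ 1))
    by (unfold plus; simpl; ring).
  apply (is_derive_plus (K := R_AbsRing) (V := R_NormedModule)); apply is_derive_pow; assumption.
Qed.

Lemma is_derive_zero_const (U : R -> Prop) (f : R -> R) : is_interval U ->
  (forall u, U u -> is_derive f u 0) -> forall x y, U x -> U y -> f x = f y.
Proof.
  intros Hc Hd x y Hx Hy.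
  assert (Hm : forall z, Rmin x y <= z <= Rmax x y -> U z).
  { intros z Hz. unfold Rmin, Rmax in Hz. destruct (Rle_dec x y).
    - apply (Hc x y z); auto.
    - apply (Hc y x z); auto; lra. }
  destruct (MVT_gen f x y (fun _ => 0)) as [c [Hc1 Hc2]].
  - intros z Hz. apply Hd, Hm. lra.
  - intros z Hz. apply continuity_pt_filterlim.
    apply (ex_derive_continuous (K := R_AbsRing) (V := R_NormedModule)).
    exists 0. apply Hd, Hm. exact Hz.
  - lra.
Qed.

Lemma sum_n_monomials_Sn (A : nat -> R) (n : nat) (x : R) :
  sum_n (fun i => A i * x ^ i) (S n) = sum_n (fun i => A i * x ^ i) n + A (S n) * x ^ S n.
Proof. rewrite sum_Sn. reflexivity. Qed.

Lemma is_derive_poly (A : nat -> R) (n : nat) (x : R) :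
  is_derive (fun y => sum_n (fun i => A i * y ^ i) (S n)) x
            (sum_n (fun i => INR (S i) * A (S i) * x ^ i) n).
Proof.
  induction n as [|n IH].
  - rewrite sum_O. apply (is_derive_ext (fun y => A 0%nat + A 1%nat * y)).
    + intros y. rewrite sum_n_monomials_Sn, sum_O. simpl. ring.
    + auto_derive; [exact I|]. simpl. ring.
  - rewrite sum_Sn.
    apply (is_derive_ext (fun y => sum_n (fun i => A i * y ^ i) (S n) + A (S (S n)) * y ^ S (S n))).
    + intros y. rewrite (sum_n_monomials_Sn A (S n)). reflexivity.
    + apply (is_derive_plus (K := R_AbsRing) (V := R_NormedModule)); [exact IH|].
      auto_derive; [exact I|]. destruct n; simpl; ring.
Qed.

Lemma sum_n_high_zero (f : nat -> R) (n : nat) :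
  (forall i, (1 <= i <= n)%nat -> f i = 0) -> sum_n f n = f 0%nat.
Proof.
  induction n as [|n IH]; intros H; [apply sum_O|].
  assert (IH' : sum_n f n = f 0%nat) by (apply IH; intros i Hi; apply H; lia).
  rewrite sum_Sn, IH', (H (S n)) by lia. apply Rplus_0_r.
Qed.

(* Differentiate along [w] and induct on the degree. *)
Lemma poly_zero_along (U : R -> Prop) (w dw : R -> R) (s : R) :
  @open R_UniformSpace U -> U s ->
  (forall u, U u -> is_derive w u (dw u)) -> (forall u, U u -> dw u <> 0) ->
  forall n A, (forall u, U u -> sum_n (fun i => A i * w u ^ i) n = 0) ->
  forall i, (i <= n)%nat -> A i = 0.
Proof.
  intros HU Hs Hw Hdw n. induction n as [|n IH]; intros A HA i Hi.
  - pose proof (HA s Hs) as H0. rewrite sum_O in H0. replace i with 0%nat by lia.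
    simpl in H0. lra.
  - assert (HA' : forall u, U u -> sum_n (fun i => INR (S i) * A (S i) * w u ^ i) n = 0).
    { intros u Hu.
      assert (D := is_derive_comp (fun y => sum_n (fun i => A i * y ^ i) (S n)) w u _ _
                     (is_derive_poly A n (w u)) (Hw u Hu)).
      apply (is_derive_locally_zero _ _ _ (filter_imp _ _ HA (HU u Hu))) in D.
      apply Rmult_integral in D as [D|D]; [now destruct (Hdw u Hu) | exact D]. }
    assert (Hhigh : forall j, (1 <= j <= S n)%nat -> A j = 0).
    { intros [|j] Hj; [lia|].
      pose proof (IH _ HA' j ltac:(lia)) as Z.
      apply Rmult_integral in Z as [Z|Z]; [|exact Z].
      now destruct (not_0_INR (S j)). }
    destruct i as [|i]; [|apply Hhigh; lia].
    pose proof (HA s Hs) as H0.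
    rewrite sum_n_high_zero in H0 by (intros j Hj; rewrite Hhigh by exact Hj; ring).
    simpl in H0. lra.
Qed.

(** * The BCV metric in coordinates *)

(* Closed forms of [g^{kl}], [d_m g_ij], [Gamma^k_ij] and [d_m Gamma^k_ij] in the
   coordinates [x = p I0], [y = p I1]; they are checked against [Defs] below. *)
Definition metric_inv_tab (a b : R) (p : pt) (k l : idx) : R :=
  let x := p I0 in let y := p I1 in let L := lam a p in
  match k, l with
  | I0, I0 => L^2
  | I0, I1 => 0
  | I0, I2 => - (b/2) * y * L
  | I1, I0 => 0
  | I1, I1 => L^2
  | I1, I2 => (b/2) * x * L
  | I2, I0 => - (b/2) * y * L
  | I2, I1 => (b/2) * x * L
  | I2, I2 => 1 + b^2/4 * (x^2 + y^2)
  end.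

Definition dmetric_tab (a b : R) (p : pt) (i j m : idx) : R :=
  let x := p I0 in let y := p I1 in let L := lam a p in
  match i, j, m with
  | I0, I0, I0 => ((-1)*x*y^2*a*b^2 + (-4)*x*a) / L^3
  | I0, I0, I1 => ((1/2)*x^2*y*a*b^2 + (-(1/2))*y^3*a*b^2 + (-4)*y*a + (1/2)*y*b^2) / L^3
  | I0, I0, I2 => 0
  | I0, I1, I0 => ((3/4)*x^2*y*a*b^2 + (-(1/4))*y^3*a*b^2 + (-(1/4))*y*b^2) / L^3
  | I0, I1, I1 => ((-(1/4))*x^3*a*b^2 + (3/4)*x*y^2*a*b^2 + (-(1/4))*x*b^2) / L^3
  | I0, I1, I2 => 0
  | I0, I2, I0 => ((-1)*x*y*a*b) / L^2
  | I0, I2, I1 => ((1/2)*x^2*a*b + (-(1/2))*y^2*a*b + (1/2)*b) / L^2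
  | I0, I2, I2 => 0
  | I1, I0, I0 => ((3/4)*x^2*y*a*b^2 + (-(1/4))*y^3*a*b^2 + (-(1/4))*y*b^2) / L^3
  | I1, I0, I1 => ((-(1/4))*x^3*a*b^2 + (3/4)*x*y^2*a*b^2 + (-(1/4))*x*b^2) / L^3
  | I1, I0, I2 => 0
  | I1, I1, I0 => ((-(1/2))*x^3*a*b^2 + (1/2)*x*y^2*a*b^2 + (-4)*x*a + (1/2)*x*b^2) / L^3
  | I1, I1, I1 => ((-1)*x^2*y*a*b^2 + (-4)*y*a) / L^3
  | I1, I1, I2 => 0
  | I1, I2, I0 => ((1/2)*x^2*a*b + (-(1/2))*y^2*a*b + (-(1/2))*b) / L^2
  | I1, I2, I1 => (1*x*y*a*b) / L^2
  | I1, I2, I2 => 0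
  | I2, I0, I0 => ((-1)*x*y*a*b) / L^2
  | I2, I0, I1 => ((1/2)*x^2*a*b + (-(1/2))*y^2*a*b + (1/2)*b) / L^2
  | I2, I0, I2 => 0
  | I2, I1, I0 => ((1/2)*x^2*a*b + (-(1/2))*y^2*a*b + (-(1/2))*b) / L^2
  | I2, I1, I1 => (1*x*y*a*b) / L^2
  | I2, I1, I2 => 0
  | I2, I2, I0 => 0
  | I2, I2, I1 => 0
  | I2, I2, I2 => 0
  end.

Definition Gamma_tab (a b : R) (p : pt) (k i j : idx) : R :=
  let x := p I0 in let y := p I1 in let L := lam a p in
  match k, i, j with
  | I0, I0, I0 => ((-2)*x*a) / L^1
  | I0, I0, I1 => ((-2)*y*a + (1/4)*y*b^2) / L^1
  | I0, I0, I2 => 0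
  | I0, I1, I0 => ((-2)*y*a + (1/4)*y*b^2) / L^1
  | I0, I1, I1 => (2*x*a + (-(1/2))*x*b^2) / L^1
  | I0, I1, I2 => (1/2)*b
  | I0, I2, I0 => 0
  | I0, I2, I1 => (1/2)*b
  | I0, I2, I2 => 0
  | I1, I0, I0 => (2*y*a + (-(1/2))*y*b^2) / L^1
  | I1, I0, I1 => ((-2)*x*a + (1/4)*x*b^2) / L^1
  | I1, I0, I2 => (-(1/2))*b
  | I1, I1, I0 => ((-2)*x*a + (1/4)*x*b^2) / L^1
  | I1, I1, I1 => ((-2)*y*a) / L^1
  | I1, I1, I2 => 0
  | I1, I2, I0 => (-(1/2))*b
  | I1, I2, I1 => 0
  | I1, I2, I2 => 0
  | I2, I0, I0 => (1*x*y*a*b + (-(1/4))*x*y*b^3) / L^2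
  | I2, I0, I1 => ((-(1/2))*x^2*a*b + (1/8)*x^2*b^3 + (1/2)*y^2*a*b + (-(1/8))*y^2*b^3) / L^2
  | I2, I0, I2 => ((-(1/4))*x*b^2) / L^1
  | I2, I1, I0 => ((-(1/2))*x^2*a*b + (1/8)*x^2*b^3 + (1/2)*y^2*a*b + (-(1/8))*y^2*b^3) / L^2
  | I2, I1, I1 => ((-1)*x*y*a*b + (1/4)*x*y*b^3) / L^2
  | I2, I1, I2 => ((-(1/4))*y*b^2) / L^1
  | I2, I2, I0 => ((-(1/4))*x*b^2) / L^1
  | I2, I2, I1 => ((-(1/4))*y*b^2) / L^1
  | I2, I2, I2 => 0
  end.

Definition dGamma_tab (a b : R) (p : pt) (m k i j : idx) : R :=
  let x := p I0 in let y := p I1 in let L := lam a p in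
  match m, k, i, j with
  | I0, I0, I0, I0 => (2*x^2*a^2 + (-2)*y^2*a^2 + (-2)*a) / L^2
  | I0, I0, I0, I1 => (4*x*y*a^2 + (-(1/2))*x*y*a*b^2) / L^2
  | I0, I0, I0, I2 => 0
  | I0, I0, I1, I0 => (4*x*y*a^2 + (-(1/2))*x*y*a*b^2) / L^2
  | I0, I0, I1, I1 => ((-2)*x^2*a^2 + (1/2)*x^2*a*b^2 + 2*y^2*a^2 + (-(1/2))*y^2*a*b^2 + 2*a + (-(1/2))*b^2) / L^2
  | I0, I0, I1, I2 => 0
  | I0, I0, I2, I0 => 0
  | I0, I0, I2, I1 => 0
  | I0, I0, I2, I2 => 0
  | I0, I1, I0, I0 => ((-4)*x*y*a^2 + 1*x*y*a*b^2) / L^2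
  | I0, I1, I0, I1 => (2*x^2*a^2 + (-(1/4))*x^2*a*b^2 + (-2)*y^2*a^2 + (1/4)*y^2*a*b^2 + (-2)*a + (1/4)*b^2) / L^2
  | I0, I1, I0, I2 => 0
  | I0, I1, I1, I0 => (2*x^2*a^2 + (-(1/4))*x^2*a*b^2 + (-2)*y^2*a^2 + (1/4)*y^2*a*b^2 + (-2)*a + (1/4)*b^2) / L^2
  | I0, I1, I1, I1 => (4*x*y*a^2) / L^2
  | I0, I1, I1, I2 => 0
  | I0, I1, I2, I0 => 0
  | I0, I1, I2, I1 => 0
  | I0, I1, I2, I2 => 0
  | I0, I2, I0, I0 => ((-3)*x^2*y*a^2*b + (3/4)*x^2*y*a*b^3 + 1*y^3*a^2*b + (-(1/4))*y^3*a*b^3 + 1*y*a*b + (-(1/4))*y*b^3) / L^3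
  | I0, I2, I0, I1 => (1*x^3*a^2*b + (-(1/4))*x^3*a*b^3 + (-3)*x*y^2*a^2*b + (3/4)*x*y^2*a*b^3 + (-1)*x*a*b + (1/4)*x*b^3) / L^3
  | I0, I2, I0, I2 => ((1/4)*x^2*a*b^2 + (-(1/4))*y^2*a*b^2 + (-(1/4))*b^2) / L^2
  | I0, I2, I1, I0 => (1*x^3*a^2*b + (-(1/4))*x^3*a*b^3 + (-3)*x*y^2*a^2*b + (3/4)*x*y^2*a*b^3 + (-1)*x*a*b + (1/4)*x*b^3) / L^3
  | I0, I2, I1, I1 => (3*x^2*y*a^2*b + (-(3/4))*x^2*y*a*b^3 + (-1)*y^3*a^2*b + (1/4)*y^3*a*b^3 + (-1)*y*a*b + (1/4)*y*b^3) / L^3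
  | I0, I2, I1, I2 => ((1/2)*x*y*a*b^2) / L^2
  | I0, I2, I2, I0 => ((1/4)*x^2*a*b^2 + (-(1/4))*y^2*a*b^2 + (-(1/4))*b^2) / L^2
  | I0, I2, I2, I1 => ((1/2)*x*y*a*b^2) / L^2
  | I0, I2, I2, I2 => 0
  | I1, I0, I0, I0 => (4*x*y*a^2) / L^2
  | I1, I0, I0, I1 => ((-2)*x^2*a^2 + (1/4)*x^2*a*b^2 + 2*y^2*a^2 + (-(1/4))*y^2*a*b^2 + (-2)*a + (1/4)*b^2) / L^2
  | I1, I0, I0, I2 => 0
  | I1, I0, I1, I0 => ((-2)*x^2*a^2 + (1/4)*x^2*a*b^2 + 2*y^2*a^2 + (-(1/4))*y^2*a*b^2 + (-2)*a + (1/4)*b^2) / L^2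
  | I1, I0, I1, I1 => ((-4)*x*y*a^2 + 1*x*y*a*b^2) / L^2
  | I1, I0, I1, I2 => 0
  | I1, I0, I2, I0 => 0
  | I1, I0, I2, I1 => 0
  | I1, I0, I2, I2 => 0
  | I1, I1, I0, I0 => (2*x^2*a^2 + (-(1/2))*x^2*a*b^2 + (-2)*y^2*a^2 + (1/2)*y^2*a*b^2 + 2*a + (-(1/2))*b^2) / L^2
  | I1, I1, I0, I1 => (4*x*y*a^2 + (-(1/2))*x*y*a*b^2) / L^2
  | I1, I1, I0, I2 => 0
  | I1, I1, I1, I0 => (4*x*y*a^2 + (-(1/2))*x*y*a*b^2) / L^2
  | I1, I1, I1, I1 => ((-2)*x^2*a^2 + 2*y^2*a^2 + (-2)*a) / L^2
  | I1, I1, I1, I2 => 0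
  | I1, I1, I2, I0 => 0
  | I1, I1, I2, I1 => 0
  | I1, I1, I2, I2 => 0
  | I1, I2, I0, I0 => (1*x^3*a^2*b + (-(1/4))*x^3*a*b^3 + (-3)*x*y^2*a^2*b + (3/4)*x*y^2*a*b^3 + 1*x*a*b + (-(1/4))*x*b^3) / L^3
  | I1, I2, I0, I1 => (3*x^2*y*a^2*b + (-(3/4))*x^2*y*a*b^3 + (-1)*y^3*a^2*b + (1/4)*y^3*a*b^3 + 1*y*a*b + (-(1/4))*y*b^3) / L^3
  | I1, I2, I0, I2 => ((1/2)*x*y*a*b^2) / L^2
  | I1, I2, I1, I0 => (3*x^2*y*a^2*b + (-(3/4))*x^2*y*a*b^3 + (-1)*y^3*a^2*b + (1/4)*y^3*a*b^3 + 1*y*a*b + (-(1/4))*y*b^3) / L^3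
  | I1, I2, I1, I1 => ((-1)*x^3*a^2*b + (1/4)*x^3*a*b^3 + 3*x*y^2*a^2*b + (-(3/4))*x*y^2*a*b^3 + (-1)*x*a*b + (1/4)*x*b^3) / L^3
  | I1, I2, I1, I2 => ((-(1/4))*x^2*a*b^2 + (1/4)*y^2*a*b^2 + (-(1/4))*b^2) / L^2
  | I1, I2, I2, I0 => ((1/2)*x*y*a*b^2) / L^2
  | I1, I2, I2, I1 => ((-(1/4))*x^2*a*b^2 + (1/4)*y^2*a*b^2 + (-(1/4))*b^2) / L^2
  | I1, I2, I2, I2 => 0
  | I2, I0, I0, I0 => 0
  | I2, I0, I0, I1 => 0
  | I2, I0, I0, I2 => 0
  | I2, I0, I1, I0 => 0
  | I2, I0, I1, I1 => 0
  | I2, I0, I1, I2 => 0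
  | I2, I0, I2, I0 => 0
  | I2, I0, I2, I1 => 0
  | I2, I0, I2, I2 => 0
  | I2, I1, I0, I0 => 0
  | I2, I1, I0, I1 => 0
  | I2, I1, I0, I2 => 0
  | I2, I1, I1, I0 => 0
  | I2, I1, I1, I1 => 0
  | I2, I1, I1, I2 => 0
  | I2, I1, I2, I0 => 0
  | I2, I1, I2, I1 => 0
  | I2, I1, I2, I2 => 0
  | I2, I2, I0, I0 => 0
  | I2, I2, I0, I1 => 0
  | I2, I2, I0, I2 => 0
  | I2, I2, I1, I0 => 0
  | I2, I2, I1, I1 => 0
  | I2, I2, I1, I2 => 0
  | I2, I2, I2, I0 => 0
  | I2, I2, I2, I1 => 0
  | I2, I2, I2, I2 => 0
  end.

Ltac lam_expr_neq0 HL :=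
  match goal with
  | |- _ * _ <> 0 => apply Rmult_integral_contrapositive_currified; lam_expr_neq0 HL
  | |- _ ^ _ <> 0 => apply pow_nonzero; lam_expr_neq0 HL
  | |- 1 <> 0 => exact R1_neq_R0
  | |- _ => first [ lra | let Hc := fresh in intro Hc; apply HL; unfold lam; rewrite <- Hc; ring ]
  end.

Lemma partial_bcv_metric (a b : R) (p : pt) (i j m : idx) : lam a p <> 0 ->
  partial (fun q => bcv_metric a b q i j) m p = dmetric_tab a b p i j m.
Proof.
  intros HL. unfold partial.
  destruct i, j, m; unfold bcv_metric, upd, dmetric_tab, lam; simpl;
  apply is_derive_unique; auto_derive;
  repeat split; try exact I; try lam_expr_neq0 HL; try reflexivity;
  unfold lam in *; field; repeat split; lam_expr_neq0 HL.
Qed.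

Lemma det3_bcv_metric (a b : R) (p : pt) : lam a p <> 0 ->
  det3 (bcv_metric a b p) = 1 / lam a p ^ 4.
Proof. intros HL. unfold det3, sum3, cof3, bcv_metric; simpl. field. exact HL. Qed.

Lemma bcv_inv_tabE (a b : R) (p : pt) (k l : idx) : lam a p <> 0 ->
  bcv_inv a b p k l = metric_inv_tab a b p k l.
Proof.
  intros HL. unfold bcv_inv, inv3. rewrite det3_bcv_metric by exact HL.
  destruct k, l; unfold cof3, bcv_metric, metric_inv_tab; simpl; field; exact HL.
Qed.

Lemma Gamma_tabE (a b : R) (p : pt) (k i j : idx) : lam a p <> 0 ->
  Gamma a b p k i j = Gamma_tab a b p k i j.
Proof.
  intros HL. unfold Gamma, sum3. rewrite !partial_bcv_metric, !bcv_inv_tabE by exact HL.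
  destruct k, i, j; unfold metric_inv_tab, dmetric_tab, Gamma_tab; simpl; field; exact HL.
Qed.

Lemma lam_pos_near (a : R) (p : pt) (i : idx) : 0 < lam a p ->
  locally (p i) (fun t => 0 < lam a (upd p i t)).
Proof.
  intros H. apply (locally_pos (fun t => lam a (upd p i t))).
  - apply (ex_derive_continuous (K := R_AbsRing) (V := R_NormedModule)).
    destruct i; unfold lam, upd; simpl; auto_derive; exact I.
  - destruct i; exact H.
Qed.

Lemma partial_Gamma (a b : R) (p : pt) (i l j k : idx) : 0 < lam a p ->
  partial (fun q => Gamma a b q l j k) i p = dGamma_tab a b p i l j k.
Proof.
  intros HL. unfold partial.
  rewrite (Derive_ext_loc _ (fun t => Gamma_tab a b (upd p i t) l j k)).
  2: { generalize (lam_pos_near a p i HL). apply filter_imp. intros t Ht.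
       apply Gamma_tabE. lra. }
  assert (HL' : lam a p <> 0) by lra. clear HL.
  destruct i, l, j, k; unfold Gamma_tab, dGamma_tab, upd, lam; simpl;
  apply is_derive_unique; auto_derive;
  repeat split; try exact I; try lam_expr_neq0 HL'; try reflexivity;
  unfold lam in *; field; repeat split; lam_expr_neq0 HL'.
Qed.

(* [bcv_k1] is the sectional curvature of horizontal planes and [bcv_k1 - bcv_k2 = b^2/4]
   that of vertical ones, so [bcv_k2 <> 0] says that M(a,b) is not a space form. *)
Definition bcv_k1 (a b : R) : R := 4 * a - 3 / 4 * b ^ 2.
Definition bcv_k2 (a b : R) : R := 4 * a - b ^ 2.

Definition kron (l i : idx) : R := if idx_eqb l i then 1 else 0.

Definition Riem_closed (a b : R) (p : pt) (l i j k : idx) : R :=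
  let g := bcv_metric a b p in
  bcv_k1 a b * (g j k * kron l i - g i k * kron l j)
  + bcv_k2 a b * (g i I2 * g k I2 * kron l j - g j I2 * g k I2 * kron l i
                  + g i k * g j I2 * kron l I2 - g j k * g i I2 * kron l I2).

Lemma Riem_closedE (a b : R) (p : pt) (l i j k : idx) : 0 < lam a p ->
  Riem a b p l i j k = Riem_closed a b p l i j k.
Proof.
  intros HL. unfold Riem. rewrite !partial_Gamma by exact HL.
  assert (HL' : lam a p <> 0) by lra. clear HL.
  unfold sum3. rewrite !Gamma_tabE by exact HL'.
  destruct l, i, j, k;
    unfold Riem_closed, bcv_k1, bcv_k2, dGamma_tab, Gamma_tab, kron, bcv_metric; simpl;
    unfold lam in *; field; exact HL'.
Qed.

Definition xi : pt := fun j => match j with I2 => 1 | _ => 0 end.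

Lemma Rop_bcv (a b : R) (p X Y Z : pt) (l : idx) : 0 < lam a p ->
  Rop a b p X Y Z l =
  (bcv_k1 a b * inner a b p Y Z - bcv_k2 a b * inner a b p Y xi * inner a b p Z xi) * X l
  + (bcv_k2 a b * inner a b p X xi * inner a b p Z xi - bcv_k1 a b * inner a b p X Z) * Y l
  + bcv_k2 a b * (inner a b p X Z * inner a b p Y xi - inner a b p Y Z * inner a b p X xi) * xi l.
Proof.
  intros HL. unfold Rop, sum3. rewrite !Riem_closedE by exact HL.
  unfold Riem_closed, inner, sum3, kron, xi. destruct l; simpl; ring.
Qed.

Definition ip3 (g : idx -> idx -> R) (X Y : pt) : R :=
  sum3 (fun i => sum3 (fun j => g i j * X i * Y j)).

Lemma ip3_sym (g : idx -> idx -> R) (X Y : pt) : (forall i j, g i j = g j i) ->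
  ip3 g X Y = ip3 g Y X.
Proof. intros Hs. unfold ip3, sum3. rewrite (Hs I0 I1), (Hs I0 I2), (Hs I1 I2). ring. Qed.

Lemma ip3_orthonormal_expansion (g : idx -> idx -> R) (T N B X Y : pt) :
  (forall i j, g i j = g j i) ->
  ip3 g T T = 1 -> ip3 g N N = 1 -> ip3 g B B = 1 ->
  ip3 g T N = 0 -> ip3 g T B = 0 -> ip3 g N B = 0 ->
  ip3 g X Y = ip3 g X T * ip3 g Y T + ip3 g X N * ip3 g Y N + ip3 g X B * ip3 g Y B.
Proof.
  intros Hs HTT HNN HBB HTN HTB HNB.
  assert (HNT : ip3 g N T = 0) by (rewrite ip3_sym; assumption).
  assert (HBT : ip3 g B T = 0) by (rewrite ip3_sym; assumption).
  assert (HBN : ip3 g B N = 0) by (rewrite ip3_sym; assumption).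
  (* The frame matrix [M] satisfies [M^T g M = 1], hence is invertible and [M M^T g = 1]. *)
  set (e := fun i : idx => match i with I0 => T | I1 => N | I2 => B end).
  set (A := fun i j : idx => sum3 (fun k => e i k * g k j)).
  set (M := fun k i : idx => e i k).
  set (d := det3 M).
  set (O := fun i j : idx => ip3 g (e i) (e j) - kron i j).
  assert (HO : forall i j, O i j = 0).
  { intros [| |] [| |]; unfold O, e, kron; simpl; lra. }
  assert (Hd : d <> 0).
  { intros Hd0.
    assert (H1 : det3 (fun i j => ip3 g (e i) (e j)) = det3 A * d)
      by (unfold d, det3, cof3, A, M, e, ip3, sum3; simpl; ring).
    replace (det3 (fun i j => ip3 g (e i) (e j))) with 1 in H1.
    - rewrite Hd0 in H1. lra.
    - unfold det3, cof3, sum3, e; simpl.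
      rewrite HTT, HNN, HBB, HTN, HTB, HNB, HNT, HBT, HBN. ring. }
  assert (HMA : forall k i, sum3 (fun j => M k j * A j i) = kron k i).
  { intros k i. apply (Rmult_eq_reg_l d); [|exact Hd].
    transitivity (d * kron k i + sum3 (fun j => sum3 (fun l => M k j * O j l * cof3 M i l))).
    - destruct k, i; unfold O, kron, d, det3, cof3, M, A, e, ip3, sum3; simpl; ring.
    - unfold sum3. rewrite !HO. ring. }
  apply Rminus_diag_uniq.
  transitivity (- sum3 (fun i => sum3 (fun j => sum3 (fun k => X i * Y j * g k j *
                   (sum3 (fun l => M k l * A l i) - kron k i))))).
  - unfold M, A, e, ip3, kron, sum3; simpl. rewrite !(Hs I1 I0), !(Hs I2 I0), !(Hs I2 I1). ring.
  - unfold sum3 at 1 2 3. rewrite !HMA. unfold sum3. ring.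
Qed.

Lemma bcv_metric_sym (a b : R) (p : pt) (i j : idx) :
  bcv_metric a b p i j = bcv_metric a b p j i.
Proof. destruct i, j; unfold bcv_metric; simpl; ring. Qed.

Lemma inner_sym (a b : R) (p X Y : pt) : inner a b p X Y = inner a b p Y X.
Proof. exact (ip3_sym _ X Y (bcv_metric_sym a b p)). Qed.

Lemma inner_ext_l (a b : R) (p X Y V : pt) : (forall l, X l = Y l) ->
  inner a b p X V = inner a b p Y V.
Proof. intros H. unfold inner, sum3. rewrite !H. reflexivity. Qed.

Lemma inner_0_l (a b : R) (p V : pt) : inner a b p (fun _ => 0) V = 0.
Proof. unfold inner, sum3. ring. Qed.

Lemma inner_scale_l (a b : R) (p : pt) (x : R) (X V : pt) :
  inner a b p (fun l => x * X l) V = x * inner a b p X V.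
Proof. unfold inner, sum3. ring. Qed.

Lemma inner_lin2_l (a b : R) (p : pt) (x y : R) (X Y V : pt) :
  inner a b p (fun l => x * X l + y * Y l) V = x * inner a b p X V + y * inner a b p Y V.
Proof. unfold inner, sum3. ring. Qed.

Lemma inner_lin3_l (a b : R) (p : pt) (x y z : R) (X Y Z V : pt) :
  inner a b p (fun l => x * X l + y * Y l + z * Z l) V
  = x * inner a b p X V + y * inner a b p Y V + z * inner a b p Z V.
Proof. unfold inner, sum3. ring. Qed.

Lemma inner_add_sub_l (a b : R) (p X Y Z V : pt) :
  inner a b p (fun l => X l + Y l - Z l) V
  = inner a b p X V + inner a b p Y V - inner a b p Z V.
Proof. unfold inner, sum3. ring. Qed.

Lemma inner_xi_xi (a b : R) (p : pt) : inner a b p xi xi = 1.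
Proof. unfold inner, sum3, xi, bcv_metric; simpl. ring. Qed.

Lemma inner_Rop_bcv (a b : R) (p X Y Z V : pt) : 0 < lam a p ->
  inner a b p (Rop a b p X Y Z) V =
  (bcv_k1 a b * inner a b p Y Z - bcv_k2 a b * inner a b p Y xi * inner a b p Z xi)
    * inner a b p X V
  + (bcv_k2 a b * inner a b p X xi * inner a b p Z xi - bcv_k1 a b * inner a b p X Z)
    * inner a b p Y V
  + bcv_k2 a b * (inner a b p X Z * inner a b p Y xi - inner a b p Y Z * inner a b p X xi)
    * inner a b p xi V.
Proof.
  intros HL. rewrite <- inner_lin3_l. apply inner_ext_l. intros l. exact (Rop_bcv a b p X Y Z l HL).
Qed.

Definition nabla_xi (a b : R) (p X : pt) : pt :=
  fun k => sum3 (fun i => sum3 (fun j => Gamma a b p k i j * X i * xi j)).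

Lemma nabla_xi_tab (a b : R) (p X : pt) (k : idx) : lam a p <> 0 ->
  nabla_xi a b p X k = sum3 (fun i => Gamma_tab a b p k i I2 * X i).
Proof. intros HL. unfold nabla_xi, sum3, xi. rewrite !Gamma_tabE by exact HL. ring. Qed.

Ltac nabla_xi_field HL :=
  unfold inner, sum3; rewrite !nabla_xi_tab by exact HL;
  unfold sum3, Gamma_tab, bcv_metric, xi; simpl; unfold lam in *; field; exact HL.

(* [xi] is a Killing field of unit length. *)
Lemma inner_nabla_xi_self (a b : R) (p X : pt) : lam a p <> 0 ->
  inner a b p X (nabla_xi a b p X) = 0.
Proof. intros HL. nabla_xi_field HL. Qed.

Lemma inner_xi_nabla_xi (a b : R) (p X : pt) : lam a p <> 0 ->
  inner a b p xi (nabla_xi a b p X) = 0.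
Proof. intros HL. nabla_xi_field HL. Qed.

Lemma inner_nabla_xi_nabla_xi (a b : R) (p X : pt) : lam a p <> 0 ->
  inner a b p (nabla_xi a b p X) (nabla_xi a b p X)
  = b ^ 2 / 4 * (inner a b p X X - inner a b p X xi ^ 2).
Proof. intros HL. nabla_xi_field HL. Qed.

Lemma nabla_xi_b0 (a : R) (p X : pt) (k : idx) : lam a p <> 0 -> nabla_xi a 0 p X k = 0.
Proof.
  intros HL. rewrite nabla_xi_tab by exact HL.
  destruct k; unfold sum3, Gamma_tab; simpl; field; exact HL.
Qed.

Definition mk3 (x y z : R) : pt := fun i => match i with I0 => x | I1 => y | I2 => z end.

Lemma mk3_eta (X : pt) : mk3 (X I0) (X I1) (X I2) = X.
Proof. apply functional_extensionality. intros [| |]; reflexivity. Qed.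

Definition cov_coord (a b : R) (p T dV V : pt) : pt :=
  fun k => dV k + sum3 (fun i => sum3 (fun j => Gamma_tab a b p k i j * T i * V j)).

(* The metric does not depend on [z], so the base point is taken at height 0. *)
Lemma inner_deriv_coord (a b : R) (x y v0 v1 v2 w0 w1 w2 : R -> R) (s dx dy dz : R) :
  is_derive x s dx -> is_derive y s dy ->
  ex_derive v0 s -> ex_derive v1 s -> ex_derive v2 s ->
  ex_derive w0 s -> ex_derive w1 s -> ex_derive w2 s ->
  lam a (mk3 (x s) (y s) 0) <> 0 ->
  let p := mk3 (x s) (y s) 0 in
  let T := mk3 dx dy dz in
  let V := mk3 (v0 s) (v1 s) (v2 s) in
  let W := mk3 (w0 s) (w1 s) (w2 s) in
  is_derive
    (fun t => inner a b (mk3 (x t) (y t) 0) (mk3 (v0 t) (v1 t) (v2 t)) (mk3 (w0 t) (w1 t) (w2 t))) s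
    (inner a b p (cov_coord a b p T (mk3 (Derive v0 s) (Derive v1 s) (Derive v2 s)) V) W
     + inner a b p V (cov_coord a b p T (mk3 (Derive w0 s) (Derive w1 s) (Derive w2 s)) W)).
Proof.
  intros Hx Hy Hv0 Hv1 Hv2 Hw0 Hw1 Hw2 HL p T V W.
  unfold p, T, V, W, inner, cov_coord, sum3, bcv_metric, Gamma_tab, mk3, lam in *; simpl in *.
  auto_derive.
  - repeat split; try exact I; try (eexists; eassumption); auto; lam_expr_neq0 HL.
  - replace (Derive (fun t => x t) s) with dx by (symmetry; apply is_derive_unique; exact Hx).
    replace (Derive (fun t => y t) s) with dy by (symmetry; apply is_derive_unique; exact Hy).
    change (Derive (fun t => v0 t) s) with (Derive v0 s);
    change (Derive (fun t => v1 t) s) with (Derive v1 s);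
    change (Derive (fun t => v2 t) s) with (Derive v2 s);
    change (Derive (fun t => w0 t) s) with (Derive w0 s);
    change (Derive (fun t => w1 t) s) with (Derive w1 s);
    change (Derive (fun t => w2 t) s) with (Derive w2 s).
    field. lam_expr_neq0 HL.
Qed.

Lemma Gamma_tab_xy (a b : R) (p : pt) (k i j : idx) :
  Gamma_tab a b p k i j = Gamma_tab a b (mk3 (p I0) (p I1) 0) k i j.
Proof. destruct k, i, j; reflexivity. Qed.

Lemma cov_coordE (a b : R) (gam V : R -> pt) (s : R) : lam a (gam s) <> 0 ->
  cov a b gam V s = cov_coord a b (mk3 (gam s I0) (gam s I1) 0) (vel gam s)
    (mk3 (Derive (fun t => V t I0) s) (Derive (fun t => V t I1) s) (Derive (fun t => V t I2) s))
    (V s).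
Proof.
  intros HL. apply functional_extensionality. intros k.
  unfold cov, cov_coord, sum3. rewrite !Gamma_tabE, !(Gamma_tab_xy a b (gam s)) by exact HL.
  destruct k; reflexivity.
Qed.

Lemma inner_deriv (a b : R) (gam V W : R -> pt) (s : R) :
  lam a (gam s) <> 0 ->
  (forall k, ex_derive (fun t => gam t k) s) ->
  (forall k, ex_derive (fun t => V t k) s) ->
  (forall k, ex_derive (fun t => W t k) s) ->
  is_derive (fun t => inner a b (gam t) (V t) (W t)) s
    (inner a b (gam s) (cov a b gam V s) (W s) + inner a b (gam s) (V s) (cov a b gam W s)).
Proof.
  intros HL Hg HV HW.
  change (inner a b (gam s)) with (inner a b (mk3 (gam s I0) (gam s I1) 0)).
  rewrite !cov_coordE by exact HL.
  pose proof (inner_deriv_coord a b (fun t => gam t I0) (fun t => gam t I1)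
    (fun t => V t I0) (fun t => V t I1) (fun t => V t I2)
    (fun t => W t I0) (fun t => W t I1) (fun t => W t I2) s
    (vel gam s I0) (vel gam s I1) (vel gam s I2)
    (Derive_correct _ _ (Hg I0)) (Derive_correct _ _ (Hg I1))
    (HV I0) (HV I1) (HV I2) (HW I0) (HW I1) (HW I2) HL) as D.
  cbv zeta in D. rewrite !(mk3_eta (vel gam s)), !(mk3_eta (V s)), !(mk3_eta (W s)) in D.
  refine (is_derive_ext _ _ _ _ _ D).
  intros t. rewrite !mk3_eta. reflexivity.
Qed.

Lemma cov_lin2 (a b : R) (gam V X Y : R -> pt) (f g : R -> R) (df dg s : R) :
  locally s (fun t => forall k, V t k = f t * X t k + g t * Y t k) ->
  is_derive f s df -> is_derive g s dg ->
  (forall k, ex_derive (fun t => X t k) s) -> (forall k, ex_derive (fun t => Y t k) s) ->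
  forall k, cov a b gam V s k =
    df * X s k + f s * cov a b gam X s k + dg * Y s k + g s * cov a b gam Y s k.
Proof.
  intros Hloc Hf Hg HX HY k.
  pose proof (locally_singleton _ _ Hloc) as H0. simpl in H0.
  unfold cov.
  rewrite (Derive_ext_loc _ (fun t => f t * X t k + g t * Y t k))
    by (generalize Hloc; apply filter_imp; intros t Ht; apply Ht).
  assert (Ef : ex_derive f s) by (eexists; exact Hf).
  assert (Eg : ex_derive g s) by (eexists; exact Hg).
  rewrite Derive_plus by (apply ex_derive_mult; auto).
  rewrite !Derive_mult by auto.
  rewrite (is_derive_unique _ _ _ Hf), (is_derive_unique _ _ _ Hg).
  unfold sum3. rewrite !H0. ring.
Qed.

(** * The curvature ODE *)

(* For a torsion-free Frenet curve and [1 <= n <= 5],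
   [nabla_T^n T = frenet_coefT kappa n * T + frenet_coefN kappa n * N]. *)
Definition frenet_coefT (kappa : R -> R) (n : nat) (t : R) : R :=
  let k := kappa t in
  let d1 := Derive_n kappa 1 t in let d2 := Derive_n kappa 2 t in
  let d3 := Derive_n kappa 3 t in
  match n with
  | 2 => - k ^ 2
  | 3 => -3 * k * d1
  | 4 => -3 * d1 ^ 2 - 4 * k * d2 + k ^ 4
  | 5 => -10 * d1 * d2 - 5 * k * d3 + 10 * k ^ 3 * d1
  | _ => 0
  end.

Definition frenet_coefN (kappa : R -> R) (n : nat) (t : R) : R :=
  let k := kappa t in
  let d1 := Derive_n kappa 1 t in let d2 := Derive_n kappa 2 t in
  let d3 := Derive_n kappa 3 t in let d4 := Derive_n kappa 4 t in
  match n with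
  | 1 => k
  | 2 => d1
  | 3 => d2 - k ^ 3
  | 4 => d3 - 6 * k ^ 2 * d1
  | 5 => d4 - 15 * k * d1 ^ 2 - 10 * k ^ 2 * d2 + k ^ 5
  | _ => 0
  end.

Ltac fold_Derive_n kappa t :=
  try change (Derive (fun x => kappa x) t) with (Derive_n kappa 1 t) in *;
  try change (Derive (fun x => Derive_n kappa 1 x) t) with (Derive_n kappa 2 t) in *;
  try change (Derive (fun x => Derive_n kappa 2 x) t) with (Derive_n kappa 3 t) in *;
  try change (Derive (fun x => Derive_n kappa 3 x) t) with (Derive_n kappa 4 t) in *;
  try change (Derive (fun x => Derive (fun x0 => Derive (fun x1 =>
                Derive (fun x2 => kappa x2) x1) x0) x) t)
    with (Derive_n kappa 4 t) in *;
  try change (Derive (fun x => Derive (fun x0 => Derive (fun x1 => kappa x1) x0) x) t)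
    with (Derive_n kappa 3 t) in *;
  try change (Derive (fun x => Derive (fun x0 => kappa x0) x) t) with (Derive_n kappa 2 t) in *.

Ltac ex_Derive_n_side Hex :=
  repeat split; try exact I;
  first [ apply (Hex 0%nat) | apply (Hex 1%nat) | apply (Hex 2%nat) | apply (Hex 3%nat) ].

Definition first_integral (kappa : R -> R) (t : R) : R :=
  kappa t * Derive_n kappa 2 t + Derive_n kappa 1 t ^ 2 / 2 - kappa t ^ 4 / 2.

(* [Fpol] is [kappa^3 (coefN 5 + (kappa'' - 2 kappa^3) c)] once [kappa'''], [kappa''''] are
   eliminated with [coefT 5 = 0] and its derivative, and [kappa''] with the first integral [C];
   [Hpol] comes from differentiating [Fpol], and [Spol] is their resultant in [kappa']. *)
Definition Fpol (u p C c : R) : R :=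
  (-7/2)*u^8 + (-3/2)*u^6*c + (-10)*u^4*C + (-7)*u^4*p^2 + u^2*C*c + (-1/2)*u^2*c*p^2
  + (-2)*C^2 + 8*C*p^2 + (-7/2)*p^4.

Definition Fpol_du (u p C c : R) : R :=
  (-28)*u^7 + (-9)*u^5*c + (-40)*u^3*C + (-28)*u^3*p^2 + 2*u*C*c + (-1)*u*c*p^2.

Definition Fpol_dp (u p C c : R) : R :=
  (-14)*u^4*p + (-1)*u^2*c*p + 16*C*p + (-14)*p^3.

Definition Hpol (u p C c : R) : R :=
  (-35)*u^8 + (-19/2)*u^6*c + (-46)*u^4*C + (-28)*u^4*p^2 + u^2*C*c + (-1/2)*u^2*c*p^2
  + 16*C^2 + (-22)*C*p^2 + 7*p^4.

Definition Spol_coef (C c : R) (i : nat) : R :=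
  match i with
  | 0 => - 15876 * C ^ 3
  | 1 => - 6174 * C ^ 2 * c
  | 2 => 158760 * C ^ 2 - 2541 / 4 * C * c ^ 2
  | 3 => 28224 * C * c - 21 * c ^ 3
  | 4 => 111132 * C + 4459 / 4 * c ^ 2
  | 5 => 6174 * c
  | _ => 0
  end.

Definition Spol (w C c : R) : R := sum_n (fun i => Spol_coef C c i * w ^ i) 5.

Lemma Hpol_of_Fpol_deriv (u p q C c : R) :
  p * Hpol u p C c = u * (Fpol_du u p C c * p + Fpol_dp u p C c * q)
    + Fpol_dp u p C c * (C + u ^ 4 / 2 - p ^ 2 / 2 - u * q).
Proof. unfold Hpol, Fpol_du, Fpol_dp. field. Qed.

Lemma Spol_resultant (u p C c : R) :
  let a2 := -7/2 in
  let a1 := (-7)*u^4 + (-1/2)*u^2*c + 8*C in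
  let a0 := (-7/2)*u^8 + (-3/2)*u^6*c + (-10)*u^4*C + u^2*C*c + (-2)*C^2 in
  let b2 := 7 in
  let b1 := (-28)*u^4 + (-1/2)*u^2*c + (-22)*C in
  let b0 := (-35)*u^8 + (-19/2)*u^6*c + (-46)*u^4*C + u^2*C*c + 16*C^2 in
  p ^ 2 * u ^ 4 * Spol (u ^ 2) C c =
    (a0 * b2 - a2 * b0) * p ^ 2 * (b2 * Fpol u p C c - a2 * Hpol u p C c)
    + (a1 * b2 - a2 * b1) * (b0 * Fpol u p C c - a0 * Hpol u p C c).
Proof.
  unfold Spol. rewrite !sum_n_monomials_Sn, sum_O.
  unfold Fpol, Hpol. simpl. field.
Qed.

Section Curvature_ODE.

Variables (kappa : R -> R) (U : R -> Prop) (s c : R).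
Hypothesis U_open : @open R_UniformSpace U.
Hypothesis U_interval : is_interval U.
Hypothesis U_s : U s.
Hypothesis kappa_pos : forall u, U u -> 0 < kappa u.
Hypothesis kappa'_neq0 : forall u, U u -> Derive_n kappa 1 u <> 0.
Hypothesis ex_derive_kappa : forall j u, U u -> ex_derive (fun x => Derive_n kappa j x) u.
Hypothesis coefT5_eq0 : forall u, U u -> frenet_coefT kappa 5 u = 0.
Hypothesis coefN5_eq : forall u, U u ->
  frenet_coefN kappa 5 u + (Derive_n kappa 2 u - 2 * kappa u ^ 3) * c = 0.

Let C := first_integral kappa s.

Lemma first_integral_const u : U u -> first_integral kappa u = C.
Proof.
  intros Hu. apply (is_derive_zero_const U _ U_interval); auto. clear u Hu.
  intros u Hu. pose proof (coefT5_eq0 u Hu) as A. unfold frenet_coefT in A. cbv zeta in A.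
  unfold first_integral. auto_derive.
  - ex_Derive_n_side (fun j => ex_derive_kappa j u Hu).
  - fold_Derive_n kappa u. lra.
Qed.

Lemma Fpol_eq0 u : U u -> Fpol (kappa u) (Derive_n kappa 1 u) C c = 0.
Proof.
  intros Hu.
  assert (D5 : is_derive (frenet_coefT kappa 5) u
     (-10 * Derive_n kappa 2 u ^ 2 - 15 * Derive_n kappa 1 u * Derive_n kappa 3 u
      - 5 * kappa u * Derive_n kappa 4 u + 30 * kappa u ^ 2 * Derive_n kappa 1 u ^ 2
      + 10 * kappa u ^ 3 * Derive_n kappa 2 u)).
  { unfold frenet_coefT. cbv beta zeta iota. auto_derive.
    - ex_Derive_n_side (fun j => ex_derive_kappa j u Hu).
    - fold_Derive_n kappa u. ring. }
  apply is_derive_locally_zero in D5;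
    [|generalize (U_open u Hu); apply filter_imp; exact coefT5_eq0].
  pose proof (coefT5_eq0 u Hu) as A. unfold frenet_coefT in A. cbv zeta in A.
  pose proof (coefN5_eq u Hu) as E. unfold frenet_coefN in E. cbv zeta in E.
  pose proof (first_integral_const u Hu) as Q. unfold first_integral in Q.
  pose proof (kappa_pos u Hu) as kp.
  set (k := kappa u) in *. set (p := Derive_n kappa 1 u) in *. set (q := Derive_n kappa 2 u) in *.
  set (r := Derive_n kappa 3 u) in *. set (r' := Derive_n kappa 4 u) in *.
  assert (Hr : r = (-10*p*q + 10*k^3*p) / (5*k)) by (field_simplify_eq; lra).
  assert (Hr' : r' = (-10*q^2 - 15*p*r + 30*k^2*p^2 + 10*k^3*q) / (5*k))
    by (field_simplify_eq; lra).
  assert (Hq : q = (C - p^2/2 + k^4/2) / k) by (field_simplify_eq; lra).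
  replace (Fpol k p C c)
    with (k ^ 3 * (r' - 15 * k * p ^ 2 - 10 * k ^ 2 * q + k ^ 5 + (q - 2 * k ^ 3) * c)).
  - rewrite E. ring.
  - rewrite Hr', Hr, Hq. unfold Fpol. field. lra.
Qed.

Lemma Hpol_eq0 u : U u -> Hpol (kappa u) (Derive_n kappa 1 u) C c = 0.
Proof.
  intros Hu.
  assert (DF : is_derive (fun v => Fpol (kappa v) (Derive_n kappa 1 v) C c) u
     (Fpol_du (kappa u) (Derive_n kappa 1 u) C c * Derive_n kappa 1 u
      + Fpol_dp (kappa u) (Derive_n kappa 1 u) C c * Derive_n kappa 2 u)).
  { unfold Fpol, Fpol_du, Fpol_dp. auto_derive.
    - ex_Derive_n_side (fun j => ex_derive_kappa j u Hu).
    - fold_Derive_n kappa u. field. }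
  apply is_derive_locally_zero in DF;
    [|generalize (U_open u Hu); apply filter_imp; exact Fpol_eq0].
  pose proof (first_integral_const u Hu) as Q. unfold first_integral in Q.
  pose proof (Hpol_of_Fpol_deriv (kappa u) (Derive_n kappa 1 u) (Derive_n kappa 2 u) C c) as G.
  rewrite DF in G.
  replace (C + kappa u ^ 4 / 2 - Derive_n kappa 1 u ^ 2 / 2 - kappa u * Derive_n kappa 2 u)
    with 0 in G by lra.
  apply (Rmult_eq_reg_l (Derive_n kappa 1 u)); [lra | exact (kappa'_neq0 u Hu)].
Qed.

Lemma Spol_eq0 u : U u -> Spol (kappa u ^ 2) C c = 0.
Proof.
  intros Hu. pose proof (Spol_resultant (kappa u) (Derive_n kappa 1 u) C c) as R0.
  cbv zeta in R0. rewrite (Fpol_eq0 u Hu), (Hpol_eq0 u Hu) in R0.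
  pose proof (kappa'_neq0 u Hu). pose proof (kappa_pos u Hu).
  apply (Rmult_eq_reg_l (Derive_n kappa 1 u ^ 2 * kappa u ^ 4)).
  - lra.
  - apply Rmult_integral_contrapositive_currified; apply pow_nonzero; lra.
Qed.

Lemma curvature_ODE_absurd : False.
Proof.
  assert (Hcoef : forall i, (i <= 5)%nat -> Spol_coef C c i = 0).
  { apply (poly_zero_along U (fun v => kappa v ^ 2)
                            (fun v => 2 * kappa v * Derive_n kappa 1 v) s); auto.
    - intros u Hu. auto_derive; [apply (ex_derive_kappa 0%nat u Hu)|].
      fold_Derive_n kappa u. ring.
    - intros u Hu. pose proof (kappa_pos u Hu). pose proof (kappa'_neq0 u Hu).
      apply Rmult_integral_contrapositive_currified; lra.
    - exact Spol_eq0. }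
  assert (Hc : c = 0) by (pose proof (Hcoef 5%nat ltac:(lia)); simpl in *; lra).
  assert (HC : C = 0).
  { pose proof (Hcoef 0%nat ltac:(lia)) as H0. simpl in H0.
    destruct (Req_dec C 0) as [|HC]; [assumption|].
    exfalso. apply (pow_nonzero C 3 HC). simpl. lra. }
  pose proof (Fpol_eq0 s U_s) as F. rewrite Hc, HC in F. unfold Fpol in F.
  pose proof (kappa_pos s U_s). pose proof (pow2_ge_0 (Derive_n kappa 1 s)).
  assert (0 < kappa s ^ 4) by (apply pow_lt; lra).
  nra.
Qed.

End Curvature_ODE.

(** * Triharmonic curves with vanishing torsion *)

Section Triharmonic_curve.

Variables (a b : R) (s0 s1 : Rbar) (gam : R -> pt) (kappa tau : R -> R) (N B : R -> pt).

Local Notation I := (in_open_int s0 s1).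
Local Notation T := (vel gam).
Local Notation "<< X , Y >>_ t" := (inner a b (gam t) X Y) (at level 0, format "<< X ,  Y >>_ t").

Hypothesis not_space_form : 4 * a <> b ^ 2.
Hypothesis lam_pos : forall s, I s -> 0 < lam a (gam s).
Hypothesis gam_smooth : forall s, I s -> forall (i : idx) (n : nat),
  ex_derive_n (fun t => gam t i) n s.
Hypothesis unit_speed : forall s, I s -> << T s, T s >>_s = 1.
Hypothesis gam_triharmonic : triharmonic a b gam I.
Hypothesis N_B_derivable : forall s, I s -> forall i : idx,
  ex_derive (fun t => N t i) s /\ ex_derive (fun t => B t i) s.
Hypothesis frame_orthonormal : forall s, I s ->
  << N s, N s >>_s = 1 /\ << B s, B s >>_s = 1 /\
  << T s, N s >>_s = 0 /\ << T s, B s >>_s = 0 /\ << N s, B s >>_s = 0.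
Hypothesis kappa_pos : forall s, I s -> 0 < kappa s.
Hypothesis frenet : forall s, I s -> forall k : idx,
  cov a b gam T s k = kappa s * N s k /\
  cov a b gam N s k = - kappa s * T s k + tau s * B s k /\
  cov a b gam B s k = - tau s * N s k.
Hypothesis torsion_free : forall s, I s -> tau s = 0.

Lemma frenet_torsion_free s : I s -> forall k,
  cov a b gam T s k = kappa s * N s k /\ cov a b gam N s k = - kappa s * T s k /\
  cov a b gam B s k = 0.
Proof.
  intros Hs k. destruct (frenet s Hs k) as [F1 [F2 F3]].
  rewrite (torsion_free s Hs) in F2, F3. split; [exact F1|]. split; [rewrite F2 | rewrite F3]; ring.
Qed.

Lemma lam_neq0 s : I s -> lam a (gam s) <> 0.
Proof. intros Hs. pose proof (lam_pos s Hs). lra. Qed.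

Ltac lam_pos_neq0 :=
  let t := fresh "t" in let Ht := fresh "Ht" in
  intros t Ht; pose proof (lam_pos t Ht) as Hl; unfold lam in Hl; simpl in Hl;
  first [ lra | apply pow_nonzero; lra ].

Lemma gam_smooth_on i : smooth_on I (fun t => gam t i).
Proof. apply smooth_of_ex_derive_n. intros t Ht n. exact (gam_smooth t Ht i n). Qed.

Lemma vel_smooth_on i : smooth_on I (fun t => T t i).
Proof. exact (smooth_Derive _ _ (gam_smooth_on i)). Qed.

Lemma Gamma_tab_smooth_on k i j : smooth_on I (fun t => Gamma_tab a b (gam t) k i j).
Proof.
  pose proof (in_open_int_open s0 s1) as HI.
  pose proof (gam_smooth_on I0). pose proof (gam_smooth_on I1).
  destruct k, i, j; unfold Gamma_tab, lam; cbv zeta; smooth_with HI fail; lam_pos_neq0.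
Qed.

Lemma metric_smooth_on i j : smooth_on I (fun t => bcv_metric a b (gam t) i j).
Proof.
  pose proof (in_open_int_open s0 s1) as HI.
  pose proof (gam_smooth_on I0). pose proof (gam_smooth_on I1).
  destruct i, j; unfold bcv_metric, lam; cbv zeta; smooth_with HI fail; lam_pos_neq0.
Qed.

Lemma cov_smooth_on (V : R -> pt) : (forall k, smooth_on I (fun t => V t k)) ->
  forall k, smooth_on I (fun t => cov a b gam V t k).
Proof.
  intros HV k. pose proof (in_open_int_open s0 s1) as HI.
  apply (smooth_ext _ HI (fun t => Derive (fun u => V u k) t
      + sum3 (fun i => sum3 (fun j => Gamma_tab a b (gam t) k i j * T t i * V t j)))).
  { intros t Ht. unfold cov, sum3. rewrite !Gamma_tabE by exact (lam_neq0 t Ht). reflexivity. }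
  unfold sum3. smooth_with HI ltac:(first [ apply vel_smooth_on | apply Gamma_tab_smooth_on
                                         | apply HV | apply smooth_Derive, HV ]).
Qed.

Lemma inner_smooth_on (V W : R -> pt) :
  (forall k, smooth_on I (fun t => V t k)) -> (forall k, smooth_on I (fun t => W t k)) ->
  smooth_on I (fun t => << V t, W t >>_t).
Proof.
  intros HV HW. pose proof (in_open_int_open s0 s1) as HI.
  unfold inner, sum3. smooth_with HI ltac:(first [apply metric_smooth_on | apply HV | apply HW]).
Qed.

Lemma inner_nabla_T_T t : I t -> << cov a b gam T t, cov a b gam T t >>_t = kappa t ^ 2.
Proof.
  intros Ht.
  replace << cov a b gam T t, cov a b gam T t >>_t with (kappa t ^ 2 * << N t, N t >>_t)
    by (unfold inner, sum3; rewrite !(fun k => proj1 (frenet_torsion_free t Ht k)); ring).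
  rewrite (proj1 (frame_orthonormal t Ht)). ring.
Qed.

(* [kappa] is only assumed positive; its regularity comes from [kappa = |nabla_T T|]. *)
Lemma kappa_smooth_on : smooth_on I kappa.
Proof.
  pose proof (in_open_int_open s0 s1) as HI.
  apply (smooth_ext _ HI (fun t => sqrt << cov a b gam T t, cov a b gam T t >>_t)).
  { intros t Ht. pose proof (kappa_pos t Ht).
    rewrite (inner_nabla_T_T t Ht), sqrt_pow2; lra. }
  apply (smooth_sqrt _ HI).
  - apply inner_smooth_on; apply cov_smooth_on, vel_smooth_on.
  - intros t Ht. rewrite (inner_nabla_T_T t Ht). apply pow_lt, kappa_pos, Ht.
Qed.

Lemma ex_derive_kappa j t : I t -> ex_derive (fun x => Derive_n kappa j x) t.
Proof. intros Ht. exact (smooth_ex_derive _ _ t (smooth_Derive_n _ _ j kappa_smooth_on) Ht). Qed.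

Lemma covT_step n (f g df dg : R -> R) :
  (forall t, I t -> forall k, covT a b gam n t k = f t * T t k + g t * N t k) ->
  (forall t, I t -> is_derive f t (df t)) -> (forall t, I t -> is_derive g t (dg t)) ->
  forall t, I t -> forall k,
    covT a b gam (S n) t k = (df t - kappa t * g t) * T t k + (dg t + kappa t * f t) * N t k.
Proof.
  intros Hn Hf Hg t Ht k. simpl.
  rewrite (cov_lin2 a b gam (covT a b gam n) T N f g (df t) (dg t) t); auto.
  - destruct (frenet_torsion_free t Ht k) as [F1 [F2 _]]. rewrite F1, F2. ring.
  - generalize (in_open_int_open s0 s1 t Ht). apply filter_imp. intros u Hu. exact (Hn u Hu).
  - intros i. exact (smooth_ex_derive _ _ t (vel_smooth_on i) Ht).
  - intros i. exact (proj1 (N_B_derivable t Ht i)).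
Qed.

Lemma frenet_coef_deriv n t : (1 <= n <= 4)%nat -> I t ->
  is_derive (frenet_coefT kappa n) t
    (frenet_coefT kappa (S n) t + kappa t * frenet_coefN kappa n t) /\
  is_derive (frenet_coefN kappa n) t
    (frenet_coefN kappa (S n) t - kappa t * frenet_coefT kappa n t).
Proof.
  intros Hn Ht.
  destruct n as [|[|[|[|[|n]]]]]; try lia;
    unfold frenet_coefT, frenet_coefN; cbv beta zeta iota; split; auto_derive;
    try ex_Derive_n_side (fun j => ex_derive_kappa j t Ht); fold_Derive_n kappa t; ring.
Qed.

Lemma covT_frenet n : (1 <= n <= 5)%nat -> forall t, I t -> forall k,
  covT a b gam n t k = frenet_coefT kappa n t * T t k + frenet_coefN kappa n t * N t k.
Proof.
  induction n as [|n IH]; intros Hn; [lia|].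
  destruct (Nat.eq_dec n 0) as [->|Hn0].
  - intros t Ht k. simpl. rewrite (proj1 (frenet_torsion_free t Ht k)).
    unfold frenet_coefT, frenet_coefN. ring.
  - pose proof (fun u => frenet_coef_deriv n u ltac:(lia)) as D.
    intros t Ht k.
    rewrite (covT_step n _ _ _ _ (IH ltac:(lia)) (fun u Hu => proj1 (D u Hu))
               (fun u Hu => proj2 (D u Hu)) t Ht k).
    ring.
Qed.

Lemma triharmonic_frame_components t : I t ->
  frenet_coefT kappa 5 t = 0 /\
  frenet_coefN kappa 5 t + (Derive_n kappa 2 t - 2 * kappa t ^ 3) *
    (bcv_k1 a b - bcv_k2 a b * (<< T t, xi >>_t ^ 2 + << N t, xi >>_t ^ 2)) = 0 /\
  (Derive_n kappa 2 t - 2 * kappa t ^ 3) * bcv_k2 a b * << N t, xi >>_t * << B t, xi >>_t = 0.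
Proof.
  intros Ht.
  assert (E : forall n, (1 <= n <= 5)%nat -> covT a b gam n t
              = fun l => frenet_coefT kappa n t * T t l + frenet_coefN kappa n t * N t l)
    by (intros n Hn; apply functional_extensionality; exact (covT_frenet n Hn t Ht)).
  assert (HV : forall V, << covT a b gam 5 t, V >>_t
      + << Rop a b (gam t) (covT a b gam 3 t) (T t) (T t), V >>_t
      - << Rop a b (gam t) (covT a b gam 2 t) (covT a b gam 1 t) (T t), V >>_t = 0).
  { intros V. rewrite <- inner_add_sub_l, <- (inner_0_l a b (gam t) V).
    apply inner_ext_l. exact (gam_triharmonic t Ht). }
  rewrite (E 1%nat), (E 2%nat), (E 3%nat), (E 5%nat) in HV by lia.
  pose proof (unit_speed t Ht) as HTT.
  destruct (frame_orthonormal t Ht) as [HNN [HBB [HTN [HTB HNB]]]].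
  pose proof (inner_sym a b (gam t) (N t) (T t)) as HNT.
  pose proof (inner_sym a b (gam t) (B t) (T t)) as HBT.
  pose proof (inner_sym a b (gam t) (B t) (N t)) as HBN.
  pose proof (inner_sym a b (gam t) xi (T t)) as HxT.
  pose proof (inner_sym a b (gam t) xi (N t)) as HxN.
  pose proof (inner_sym a b (gam t) xi (B t)) as HxB.
  pose proof (HV (T t)) as VT. pose proof (HV (N t)) as VN. pose proof (HV (B t)) as VB.
  clear HV E.
  rewrite !inner_Rop_bcv in VT, VN, VB by exact (lam_pos t Ht).
  rewrite ?inner_lin2_l, ?HNT, ?HBT, ?HBN, ?HxT, ?HxN, ?HxB,
    ?HTT, ?HNN, ?HBB, ?HTN, ?HTB, ?HNB in VT.
  rewrite ?inner_lin2_l, ?HNT, ?HBT, ?HBN, ?HxT, ?HxN, ?HxB,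
    ?HTT, ?HNN, ?HBB, ?HTN, ?HTB, ?HNB in VN.
  rewrite ?inner_lin2_l, ?HNT, ?HBT, ?HBN, ?HxT, ?HxN, ?HxB,
    ?HTT, ?HNN, ?HBB, ?HTN, ?HTB, ?HNB in VB.
  unfold frenet_coefT, frenet_coefN in VT, VN, VB |- *. cbv zeta in VT, VN, VB |- *.
  split; [|split]; lra.
Qed.

Lemma inner_xi_deriv (V : R -> pt) t : I t -> (forall k, ex_derive (fun u => V u k) t) ->
  is_derive (fun u => << V u, xi >>_u) t
    (<< cov a b gam V t, xi >>_t + << V t, nabla_xi a b (gam t) (T t) >>_t).
Proof.
  intros Ht HV.
  replace << V t, nabla_xi a b (gam t) (T t) >>_t with << V t, cov a b gam (fun _ => xi) t >>_t.
  - apply inner_deriv; auto.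
    + exact (lam_neq0 t Ht).
    + intros k. exact (gam_smooth t Ht k 1%nat).
    + intros k. apply ex_derive_const.
  - rewrite !(inner_sym a b (gam t) (V t)). apply inner_ext_l. intros l.
    unfold cov, nabla_xi. rewrite Derive_const. ring.
Qed.

Lemma xiT_deriv t : I t ->
  is_derive (fun u => << T u, xi >>_u) t (kappa t * << N t, xi >>_t).
Proof.
  intros Ht.
  replace (kappa t * << N t, xi >>_t)
    with (<< cov a b gam T t, xi >>_t + << T t, nabla_xi a b (gam t) (T t) >>_t).
  - apply inner_xi_deriv; [exact Ht|]. intros k. exact (smooth_ex_derive _ _ t (vel_smooth_on k) Ht).
  - rewrite inner_nabla_xi_self by exact (lam_neq0 t Ht). rewrite Rplus_0_r, <- inner_scale_l.
    apply inner_ext_l. intros l. exact (proj1 (frenet_torsion_free t Ht l)).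
Qed.

Lemma xiN_deriv t : I t ->
  is_derive (fun u => << N u, xi >>_u) t
    (- kappa t * << T t, xi >>_t + << N t, nabla_xi a b (gam t) (T t) >>_t).
Proof.
  intros Ht.
  replace (- kappa t * << T t, xi >>_t) with << cov a b gam N t, xi >>_t.
  - apply inner_xi_deriv; [exact Ht|]. intros k. exact (proj1 (N_B_derivable t Ht k)).
  - rewrite <- inner_scale_l. apply inner_ext_l. intros l.
    exact (proj1 (proj2 (frenet_torsion_free t Ht l))).
Qed.

Lemma xiB_deriv t : I t ->
  is_derive (fun u => << B u, xi >>_u) t << B t, nabla_xi a b (gam t) (T t) >>_t.
Proof.
  intros Ht.
  replace << B t, nabla_xi a b (gam t) (T t) >>_t
    with (<< cov a b gam B t, xi >>_t + << B t, nabla_xi a b (gam t) (T t) >>_t).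
  - apply inner_xi_deriv; [exact Ht|]. intros k. exact (proj2 (N_B_derivable t Ht k)).
  - rewrite (inner_ext_l a b (gam t) (cov a b gam B t) (fun _ => 0)), inner_0_l; [ring|].
    intros l. exact (proj2 (proj2 (frenet_torsion_free t Ht l))).
Qed.

Lemma frame_expansion t (X Y : pt) : I t ->
  << X, Y >>_t = << X, T t >>_t * << Y, T t >>_t + << X, N t >>_t * << Y, N t >>_t
                 + << X, B t >>_t * << Y, B t >>_t.
Proof.
  intros Ht. pose proof (unit_speed t Ht).
  destruct (frame_orthonormal t Ht) as [HNN [HBB [HTN [HTB HNB]]]].
  apply ip3_orthonormal_expansion; auto using bcv_metric_sym.
Qed.

(* Parseval for [xi] and [nabla_T xi], which is orthogonal to [T] and to [xi]. *)
Lemma frame_xi_identities t : I t ->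
  let W := nabla_xi a b (gam t) (T t) in
  << T t, xi >>_t ^ 2 + << N t, xi >>_t ^ 2 + << B t, xi >>_t ^ 2 = 1 /\
  << N t, W >>_t * << N t, xi >>_t + << B t, W >>_t * << B t, xi >>_t = 0 /\
  << N t, W >>_t ^ 2 + << B t, W >>_t ^ 2 = b ^ 2 / 4 * (1 - << T t, xi >>_t ^ 2).
Proof.
  intros Ht W. pose proof (lam_neq0 t Ht) as HL.
  assert (HWT : << W, T t >>_t = 0)
    by (rewrite inner_sym; apply inner_nabla_xi_self, HL).
  assert (HWx : << W, xi >>_t = 0) by (rewrite inner_sym; apply inner_xi_nabla_xi, HL).
  pose proof (frame_expansion t xi xi Ht) as P1.
  pose proof (frame_expansion t W xi Ht) as P2.
  pose proof (frame_expansion t W W Ht) as P3.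
  rewrite inner_xi_xi in P1. rewrite HWx, HWT in P2.
  unfold W in P3 at 1 2. rewrite inner_nabla_xi_nabla_xi, unit_speed in P3 by assumption.
  fold W in P3. rewrite HWT in P3.
  rewrite !(inner_sym a b (gam t) xi) in P1, P2. rewrite !(inner_sym a b (gam t) W) in P2, P3.
  split; [|split]; nra.
Qed.

Section Nonconstant_curvature.

Variables (U : R -> Prop) (s : R).
Hypothesis U_open : @open R_UniformSpace U.
Hypothesis U_interval : is_interval U.
Hypothesis U_s : U s.
Hypothesis U_sub : forall u, U u -> I u.
Hypothesis kappa'_neq0 : forall u, U u -> Derive_n kappa 1 u <> 0.

Lemma xiN_xiB_eq0 u : U u -> << N u, xi >>_u * << B u, xi >>_u = 0.
Proof.
  intros Hu. destruct (Req_dec (<< N u, xi >>_u * << B u, xi >>_u) 0) as [|HNB];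
    [assumption | exfalso].
  assert (Hk2 : bcv_k2 a b <> 0) by (unfold bcv_k2; lra).
  assert (Hloc : locally u (fun v => Derive_n kappa 2 v - 2 * kappa v ^ 3 = 0)).
  { assert (Hd : ex_derive (fun v => << N v, xi >>_v * << B v, xi >>_v) u).
    { apply ex_derive_mult; eexists; [apply xiN_deriv | apply xiB_deriv]; exact (U_sub u Hu). }
    generalize (filter_and _ _ (locally_neq0 _ u Hd HNB) (U_open u Hu)).
    apply filter_imp. intros v [Hv HUv].
    destruct (triharmonic_frame_components v (U_sub v HUv)) as [_ [_ E]].
    apply (Rmult_eq_reg_r (bcv_k2 a b * (<< N v, xi >>_v * << B v, xi >>_v))); [lra|].
    apply Rmult_integral_contrapositive_currified; assumption. }
  pose proof (locally_singleton _ _ Hloc) as E2. cbv beta in E2.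
  assert (E3 : Derive_n kappa 3 u - 6 * kappa u ^ 2 * Derive_n kappa 1 u = 0).
  { apply (is_derive_locally_zero _ u _ Hloc). auto_derive.
    - ex_Derive_n_side (fun j => ex_derive_kappa j u (U_sub u Hu)).
    - fold_Derive_n kappa u. ring. }
  destruct (triharmonic_frame_components u (U_sub u Hu)) as [E5 _].
  unfold frenet_coefT in E5. cbv zeta in E5.
  replace (Derive_n kappa 2 u) with (2 * kappa u ^ 3) in E5 by lra.
  replace (Derive_n kappa 3 u) with (6 * kappa u ^ 2 * Derive_n kappa 1 u) in E5 by lra.
  assert (E : kappa u ^ 3 * Derive_n kappa 1 u = 0) by lra.
  apply Rmult_integral in E as [E|E].
  - pose proof (kappa_pos u (U_sub u Hu)). apply (pow_nonzero (kappa u) 3); [lra | exact E].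
  - exact (kappa'_neq0 u Hu E).
Qed.

Lemma nonconstant_curvature_b0 : b = 0 -> False.
Proof.
  intros Hb.
  assert (HwN : forall u, U u -> << N u, nabla_xi a b (gam u) (T u) >>_u = 0).
  { intros u Hu. rewrite inner_sym, (inner_ext_l _ _ _ _ (fun _ => 0)) by
      (intros l; subst b; exact (nabla_xi_b0 a _ _ l (lam_neq0 u (U_sub u Hu)))).
    apply inner_0_l. }
  set (m := << T s, xi >>_s ^ 2 + << N s, xi >>_s ^ 2).
  assert (Hm : forall u, U u -> << T u, xi >>_u ^ 2 + << N u, xi >>_u ^ 2 = m).
  { intros u Hu.
    apply (is_derive_zero_const U (fun v => << T v, xi >>_v ^ 2 + << N v, xi >>_v ^ 2));
      auto; clear u Hu.
    intros u Hu. pose proof (is_derive_sum_sq _ _ u _ _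
      (xiT_deriv u (U_sub u Hu)) (xiN_deriv u (U_sub u Hu))) as D.
    rewrite HwN in D by exact Hu. ring_simplify in D. exact D. }
  apply (curvature_ODE_absurd kappa U s (bcv_k1 a b - bcv_k2 a b * m) U_open U_interval U_s).
  - intros u Hu. exact (kappa_pos u (U_sub u Hu)).
  - exact kappa'_neq0.
  - intros j u Hu. exact (ex_derive_kappa j u (U_sub u Hu)).
  - intros u Hu. exact (proj1 (triharmonic_frame_components u (U_sub u Hu))).
  - intros u Hu. rewrite <- (Hm u Hu).
    exact (proj1 (proj2 (triharmonic_frame_components u (U_sub u Hu)))).
Qed.

Lemma xiN_eq0 : b <> 0 -> forall u, U u -> << N u, xi >>_u = 0.
Proof.
  intros Hb u Hu. destruct (Req_dec << N u, xi >>_u 0) as [|Z]; [assumption | exfalso].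
  assert (Hloc : locally u (fun v => << B v, xi >>_v = 0)).
  { generalize (filter_and _ _ (locally_neq0 _ u (ex_intro _ _ (xiN_deriv u (U_sub u Hu))) Z)
                  (U_open u Hu)).
    apply filter_imp. intros v [Hv HUv].
    destruct (Rmult_integral _ _ (xiN_xiB_eq0 v HUv)) as [E|E]; [contradiction | exact E]. }
  pose proof (is_derive_locally_zero _ u _ Hloc (xiB_deriv u (U_sub u Hu))) as HwB.
  pose proof (locally_singleton _ _ Hloc) as HxB. cbv beta in HxB.
  destruct (frame_xi_identities u (U_sub u Hu)) as [F1 [F2 F3]]. cbv zeta in F1, F2, F3.
  rewrite HwB, HxB in F2. rewrite HwB in F3. rewrite HxB in F1.
  assert (HwN : << N u, nabla_xi a b (gam u) (T u) >>_u = 0)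
    by (apply (Rmult_eq_reg_r << N u, xi >>_u); [lra | exact Z]).
  rewrite HwN in F3. pose proof (pow2_gt_0 b Hb).
  apply Z, pow2_eq0. nra.
Qed.

Lemma nonconstant_curvature_b_neq0 : b <> 0 -> False.
Proof.
  intros Hb. pose proof (pow2_gt_0 b Hb) as Hb2. pose proof (xiN_eq0 Hb) as HxN.
  assert (HwN : forall u, U u ->
            << N u, nabla_xi a b (gam u) (T u) >>_u = kappa u * << T u, xi >>_u).
  { intros u Hu.
    assert (Hloc : locally u (fun v => << N v, xi >>_v = 0))
      by (generalize (U_open u Hu); apply filter_imp; exact HxN).
    pose proof (is_derive_locally_zero _ u _ Hloc (xiN_deriv u (U_sub u Hu))). lra. }
  set (c := << T s, xi >>_s).
  assert (HxT : forall u, U u -> << T u, xi >>_u = c).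
  { intros u Hu. apply (is_derive_zero_const U (fun v => << T v, xi >>_v) U_interval); auto.
    clear u Hu. intros u Hu. pose proof (xiT_deriv u (U_sub u Hu)) as D.
    rewrite HxN, Rmult_0_r in D by exact Hu. exact D. }
  pose proof (kappa_pos s (U_sub s U_s)) as Hks.
  destruct (Req_dec << B s, xi >>_s 0) as [ZB|ZB].
  - (* then [T] is vertical, which forces [kappa = 0] *)
    destruct (frame_xi_identities s (U_sub s U_s)) as [F1 [_ F3]]. cbv zeta in F1, F3.
    rewrite (HxN s U_s), ZB in F1. rewrite (HwN s U_s) in F3. fold c in F1, F3.
    assert (E : (kappa s * c) ^ 2 = 0) by nra.
    apply pow2_eq0, Rmult_integral in E as [E|E]; [lra|].
    rewrite E in F1. lra.
  - assert (Hloc : locally s (fun v => kappa v ^ 2 * c ^ 2 - b ^ 2 / 4 * (1 - c ^ 2) = 0)).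
    { generalize (filter_and _ _ (locally_neq0 _ s (ex_intro _ _ (xiB_deriv s (U_sub s U_s))) ZB)
                    (U_open s U_s)).
      apply filter_imp. intros v [Hv HUv].
      destruct (frame_xi_identities v (U_sub v HUv)) as [_ [G2 G3]]. cbv zeta in G2, G3.
      rewrite (HxN v HUv) in G2. rewrite (HwN v HUv), (HxT v HUv) in G3.
      assert (HwB : << B v, nabla_xi a b (gam v) (T v) >>_v = 0)
        by (apply (Rmult_eq_reg_r << B v, xi >>_v); [lra | exact Hv]).
      rewrite HwB in G3. lra. }
    assert (D : is_derive (fun v => kappa v ^ 2 * c ^ 2 - b ^ 2 / 4 * (1 - c ^ 2)) s
                  (2 * kappa s * Derive_n kappa 1 s * c ^ 2)).
    { auto_derive; [exact (ex_derive_kappa 0 s (U_sub s U_s))|].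
      fold_Derive_n kappa s. ring. }
    apply (is_derive_locally_zero _ s _ Hloc) in D.
    pose proof (locally_singleton _ _ Hloc) as E. cbv beta in E.
    apply Rmult_integral in D as [D|D].
    + apply Rmult_integral in D as [D|D]; [lra | exact (kappa'_neq0 s U_s D)].
    + rewrite (pow2_eq0 c D) in E. lra.
Qed.

End Nonconstant_curvature.

Lemma kappa'_eq0 s : I s -> Derive_n kappa 1 s = 0.
Proof.
  intros Hs. destruct (Req_dec (Derive_n kappa 1 s) 0) as [|Hne]; [assumption | exfalso].
  assert (Hloc : locally s (fun u => I u /\ Derive_n kappa 1 u <> 0)).
  { apply filter_and; [exact (in_open_int_open s0 s1 s Hs)|].
    exact (locally_neq0 _ s (ex_derive_kappa 1 s Hs) Hne). }
  destruct (locally_in_open_int _ s Hloc) as [e [He HU]].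
  assert (U_s : in_open_int (s - e) (s + e) s) by (split; simpl; lra).
  destruct (Req_dec b 0) as [Hb|Hb].
  - apply (nonconstant_curvature_b0 (in_open_int (s - e) (s + e)) s);
      auto using in_open_int_open, in_open_int_interval; intros u Hu; apply (HU u Hu).
  - apply (nonconstant_curvature_b_neq0 (in_open_int (s - e) (s + e)) s);
      auto using in_open_int_open, in_open_int_interval; intros u Hu; apply (HU u Hu).
Qed.

End Triharmonic_curve.

Theorem proposition4p5 (a b : R) (s0 s1 : Rbar) (gam : R -> pt)
  (kappa tau : R -> R) (N B : R -> pt) :
  Rbar_lt s0 s1 ->
  4 * a <> b ^ 2 ->
  (* gam is a smooth curve in M(a,b) *)
  (forall s, in_open_int s0 s1 s -> 0 < lam a (gam s)) ->
  (forall s, in_open_int s0 s1 s -> forall (i : idx) (n : nat),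
       ex_derive_n (fun t => gam t i) n s) ->
  (* arc-length parametrization *)
  (forall s, in_open_int s0 s1 s -> inner a b (gam s) (vel gam s) (vel gam s) = 1) ->
  (* triharmonic *)
  triharmonic a b gam (in_open_int s0 s1) ->
  (* Frenet frame (T, N, B) with curvature kappa > 0 and torsion tau *)
  (forall s, in_open_int s0 s1 s -> forall i : idx,
       ex_derive (fun t => N t i) s /\ ex_derive (fun t => B t i) s) ->
  (forall s, in_open_int s0 s1 s ->
       inner a b (gam s) (N s) (N s) = 1 /\ inner a b (gam s) (B s) (B s) = 1 /\
       inner a b (gam s) (vel gam s) (N s) = 0 /\
       inner a b (gam s) (vel gam s) (B s) = 0 /\
       inner a b (gam s) (N s) (B s) = 0) ->
  (forall s, in_open_int s0 s1 s -> 0 < kappa s) ->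
  (forall s, in_open_int s0 s1 s -> forall k : idx,
       cov a b gam (vel gam) s k = kappa s * N s k /\
       cov a b gam N s k = - kappa s * vel gam s k + tau s * B s k /\
       cov a b gam B s k = - tau s * N s k) ->
  (* vanishing torsion *)
  (forall s, in_open_int s0 s1 s -> tau s = 0) ->
  (* conclusion: constant curvature *)
  forall s t, in_open_int s0 s1 s -> in_open_int s0 s1 t -> kappa s = kappa t.
Proof.
  intros _ not_space_form lam_pos gam_smooth unit_speed triharm N_B_derivable
    frame_orthonormal kappa_pos frenet torsion_free.
  apply (is_derive_zero_const _ kappa (in_open_int_interval s0 s1)).
  intros u Hu.
  rewrite <- (kappa'_eq0 a b s0 s1 gam kappa tau N B not_space_form lam_pos gam_smooth
               unit_speed triharm N_B_derivable frame_orthonormal kappa_pos frenet torsion_free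
               u Hu).
  exact (Derive_correct _ _ (ex_derive_kappa a b s0 s1 gam kappa tau N B lam_pos gam_smooth
                               frame_orthonormal kappa_pos frenet torsion_free 0 u Hu)).
Qed.
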